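(* In an execution of Algorithm A1 (described in the context) with $n>3t$ and a weak common coin, if at the start of some round $r$ all non-faulty processes have the same estimate $\mathit{est}=v\in\{0,1\}$, then every non-faulty process decides $v$ in round $r$ (if it has not already decided), and no non-faulty process ever decides a value different from $v$ in any later round.
   Context: System model: $n$ asynchronous sequential processes $p_1,\dots,p_n$, of which at most $t$ are Byzantine (behave arbitrarily, may collude); the others are non-faulty. Processes communicate over reliable asynchronous point-to-point channels between every pair: messages between non-faulty processes are eventually delivered, unaltered, not duplicated, and the receiver knows the identity of the sender; there is no bound on delays and the adversary controls delivery order. ''Broadcast $m$'' means sending $m$ to every process (including oneself). When counting messages ''received from $k$ distinct processes'', at most one message per sender is counted. BV-Broadcast with tag $T$ and input $v$ at process $p_i$: set $\mathit{bin}_i\leftarrow\emptyset$; broadcast $\mathrm{BVAL}(T,v)$; return (a reference to) $\mathit{bin}_i$, which may keep growing afterwards. In the background, for every value $x$: when $\mathrm{BVAL}(T,x)$ has been received from $t+1$ distinct processes and $p_i$ has not yet broadcast $\mathrm{BVAL}(T,x)$, $p_i$ broadcasts $\mathrm{BVAL}(T,x)$; when $\mathrm{BVAL}(T,x)$ has been received from $2t+1$ distinct processes, $p_i$ adds $x$ to $\mathit{bin}_i$. SBV-Broadcast with tag $T$ and input $v$ at $p_i$: $\mathit{bin}_i\leftarrow$ BV-Broadcast with tag $T$ and input $v$; wait until $\mathit{bin}_i\neq\emptyset$; broadcast $\mathrm{AUX}(T,w)$ for some $w\in\mathit{bin}_i$; wait until there are $n-t$ distinct processes $p_j$ from which a message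 $\mathrm{AUX}(T,w_j)$ has been received with $w_j\in \mathit{bin}_i$ (the current value of the growing set); let $\mathit{view}_i$ be the set of these values $w_j$; return $(\mathit{view}_i,\mathit{bin}_i)$ ($\mathit{view}_i$ is fixed upon return, $\mathit{bin}_i$ may still grow). Weak common coin with parameter $d\ge 2$: for each round $r$, a call $\mathsf{random}()$ in round $r$ returns a bit to each non-faulty caller; with probability $1/d$ all non-faulty processes get $0$, with probability $1/d$ all get $1$, and with probability $(d-2)/d$ they may get different values. The round-$r$ output is random and unpredictable, and is not revealed to anyone before at least one non-faulty process has called $\mathsf{random}()$ in round $r$. Algorithm A1 (binary consensus), at non-faulty $p_i$ proposing $v_i\in\{0,1\}$: set $\mathit{est}\leftarrow v_i$, $r\leftarrow 0$. Repeat forever: (1) $r\leftarrow r+1$. (2) $(\mathit{view}_0,\mathit{bin})\leftarrow$ SBV-Broadcast with tag $(r,0)$ and input $\mathit{est}$. (3) Broadcast $\mathrm{AUXSET}(r,\mathit{view}_0)$. (4) Wait until there are $n-t$ distinct processes $p_j$ from which a message $\mathrm{AUXSET}(r,S_j)$ has been received with $S_j\subseteq\mathit{bin}$ (current value), and let $\mathit{view}_1=\bigcup_j S_j$. (5) If $\mathit{view}_1=\{w\}$ then $\mathit{est}\leftarrow w$, else $\mathit{est}\leftarrow\bot$. (6) $(\mathit{view}_2,\_)\leftarrow$ SBV-Broadcast with tag $(r,1)$ and input $\mathit{est}\in\{0,1,\bot\}$. (7) $s\leftarrow\mathsf{random}()$. (8) If $\mathit{view}_2=\{v\}$ with $v\neq\bot$: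 $\mathit{est}\leftarrow v$ and decide $v$ if not yet decided; if $\mathit{view}_2=\{v,\bot\}$ with $v\in\{0,1\}$: $\mathit{est}\leftarrow v$; if $\mathit{view}_2=\{\bot\}$: $\mathit{est}\leftarrow s$. *)

From HB Require Import structures.
From mathcomp Require Import all_boot.
Set Implicit Arguments. Unset Strict Implicit. Unset Printing Implicit Defensive.

(* Values: [Some b] is the bit b, [None] is the default value ⊥. *)
Definition value := option bool.

(* Messages.  A tag T = (r, b) is represented by a round r and a bit b
   (b = false for tag (r,0), b = true for tag (r,1)). *)
Inductive msg :=
| BVAL of nat & bool & value
| AUX of nat & bool & value
| AUXSET of nat & {set value}.

Definition msg_enc (m : msg) :
  (nat * bool * value + nat * bool * value) + (nat * {set value}) :=
  match m with
  | BVAL r b x => inl (inl (r, b, x))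
  | AUX r b x => inl (inr (r, b, x))
  | AUXSET r X => inr (r, X)
  end.
Definition msg_dec (e : (nat * bool * value + nat * bool * value) + (nat * {set value})) : msg :=
  match e with
  | inl (inl (r, b, x)) => BVAL r b x
  | inl (inr (r, b, x)) => AUX r b x
  | inr (r, X) => AUXSET r X
  end.
Lemma msg_encK : cancel msg_enc msg_dec. Proof. by case. Qed.
HB.instance Definition _ := Equality.copy msg (can_type msg_encK).

(* Per-tag state of a BV-Broadcast instance at a process:
   whether it has been invoked, the set bin, and the set of values x for
   which BVAL(T,x) has already been broadcast. *)
Record tagst := TagSt { started : bool; bin : {set value}; bsent : {set value} }.
Definition tag0 : tagst := TagSt false set0 set0.

(* Program counter of the main thread of A1:
   PInc          : about to execute step (1)  r <- r+1
   PStart        : start of round r (step (1) done), about to invoke step (2)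
   PWaitBin b    : inside SBV-Broadcast with tag (r,b), waiting for bin <> ∅
   PWaitAux b    : inside SBV-Broadcast with tag (r,b), waiting for n-t AUX
   PWaitAuxset   : step (4), waiting for n-t AUXSET messages *)
Inductive pcT := PInc | PStart | PWaitBin of bool | PWaitAux of bool | PWaitAuxset.

Definition updtag (tg : nat -> bool -> tagst) (r : nat) (b : bool) (ts : tagst) :=
  fun r' b' => if (r' == r) && (b' == b) then ts else tg r' b'.

Definition est_of_view1 (V : {set value}) : value :=
  if [pick w | V == [set w]] is Some w then w else None.

(* step (8), estimate part; [coin] is the value s returned by random() *)
Definition est_after (V : {set value}) (coin : bool) (e : value) : value :=
  if [pick b : bool | V == [set Some b]] is Some b then Some b
  else if [pick b : bool | V == [set Some b; None]] is Some b then Some b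
  else if V == [set None] then Some coin
  else e.

Definition dec_after (V : {set value}) (r : nat) (d : option (bool * nat)) :=
  if [pick b : bool | V == [set Some b]] is Some b then
    (if d is None then Some (b, r) else d)
  else d.

Section Model.
Variables (n t : nat) (F : {set 'I_n}). (* F = set of Byzantine processes *)

Record lstate := LState {
  pc : pcT;
  rnd : nat;
  est : value;
  dec : option (bool * nat);          (* Some (v, r): decided v in round r *)
  tags : nat -> bool -> tagst;        (* BV-Broadcast instances *)
  rcvd : 'I_n -> msg -> bool          (* rcvd j m : m has been received from j *)
}.

Record config := Config {
  lst : 'I_n -> lstate;               (* local states (meaningful for i \notin F) *)
  net : 'I_n -> 'I_n -> msg -> bool   (* net j i m : j has sent m to i *)
}.

Definition upd (f : 'I_n -> lstate) (i : 'I_n) (s : lstate) :=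
  fun j => if j == i then s else f j.

(* p_i broadcasts m: sends m to every process, including itself *)
Definition bcast (nt : 'I_n -> 'I_n -> msg -> bool) (i : 'I_n) (m : msg) :=
  fun a b m' => nt a b m' || ((a == i) && (m' == m)).

Definition bcast_opt nt i (o : option msg) :=
  if o is Some m then bcast nt i m else nt.

Definition nrcv (s : lstate) (m : msg) := #|[set j | rcvd s j m]|.

(* Atomic steps of the main thread of A1 at a non-faulty process;
   the option msg is the message broadcast by the step, if any. *)
Inductive main_step (s : lstate) : lstate -> option msg -> Prop :=
| MS_inc : pc s = PInc ->
    main_step s (LState PStart (rnd s).+1 (est s) (dec s) (tags s) (rcvd s)) None
| MS_start : (* step (2): invoke BV-Broadcast with tag (r,0) and input est *)
    pc s = PStart ->
    main_step s
      (LState (PWaitBin false) (rnd s) (est s) (dec s)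
         (updtag (tags s) (rnd s) false (TagSt true set0 [set est s])) (rcvd s))
      (Some (BVAL (rnd s) false (est s)))
| MS_aux : forall b w, (* SBV: bin <> ∅, broadcast AUX(T,w) for some w in bin *)
    pc s = PWaitBin b -> w \in bin (tags s (rnd s) b) ->
    main_step s (LState (PWaitAux b) (rnd s) (est s) (dec s) (tags s) (rcvd s))
      (Some (AUX (rnd s) b w))
| MS_view0 : forall (J : {set 'I_n}) (f : 'I_n -> value),
    (* SBV with tag (r,0) returns view0 = f @: J; step (3) *)
    pc s = PWaitAux false -> #|J| = n - t ->
    (forall j, j \in J ->
       rcvd s j (AUX (rnd s) false (f j)) && (f j \in bin (tags s (rnd s) false))) ->
    main_step s (LState PWaitAuxset (rnd s) (est s) (dec s) (tags s) (rcvd s))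
      (Some (AUXSET (rnd s) (f @: J)))
| MS_view1 : forall (J : {set 'I_n}) (g : 'I_n -> {set value}),
    (* steps (4), (5), and invocation of BV-Broadcast in step (6) *)
    pc s = PWaitAuxset -> #|J| = n - t ->
    (forall j, j \in J ->
       rcvd s j (AUXSET (rnd s) (g j)) && (g j \subset bin (tags s (rnd s) false))) ->
    main_step s
      (LState (PWaitBin true) (rnd s) (est_of_view1 (\bigcup_(j in J) g j)) (dec s)
         (updtag (tags s) (rnd s) true
            (TagSt true set0 [set est_of_view1 (\bigcup_(j in J) g j)])) (rcvd s))
      (Some (BVAL (rnd s) true (est_of_view1 (\bigcup_(j in J) g j))))
| MS_view2 : forall (J : {set 'I_n}) (f : 'I_n -> value) (coin : bool),
    (* SBV with tag (r,1) returns view2 = f @: J; steps (7), (8) *)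
    pc s = PWaitAux true -> #|J| = n - t ->
    (forall j, j \in J ->
       rcvd s j (AUX (rnd s) true (f j)) && (f j \in bin (tags s (rnd s) true))) ->
    main_step s
      (LState PInc (rnd s) (est_after (f @: J) coin (est s))
         (dec_after (f @: J) (rnd s) (dec s)) (tags s) (rcvd s))
      None.

Definition echo_st (s : lstate) r b x :=
  let ts := tags s r b in
  LState (pc s) (rnd s) (est s) (dec s)
    (updtag (tags s) r b (TagSt (started ts) (bin ts) (x |: bsent ts))) (rcvd s).

Definition add_st (s : lstate) r b x :=
  let ts := tags s r b in
  LState (pc s) (rnd s) (est s) (dec s)
    (updtag (tags s) r b (TagSt (started ts) (x |: bin ts) (bsent ts))) (rcvd s).

Definition deliver_st (s : lstate) (j : 'I_n) (m : msg) :=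
  LState (pc s) (rnd s) (est s) (dec s) (tags s)
    (fun j' m' => rcvd s j' m' || ((j' == j) && (m' == m))).

Inductive label :=
| LMain of 'I_n
| LEcho of 'I_n & nat & bool & value     (* BV background: echo BVAL *)
| LAdd of 'I_n & nat & bool & value      (* BV background: add to bin *)
| LDeliver of 'I_n & 'I_n & msg          (* delivery to i of m sent by j *)
| LByz of 'I_n & 'I_n & msg              (* Byzantine j sends m to i *)
| LIdle.

Inductive step (c : config) : label -> config -> Prop :=
| St_main : forall i s' o, i \notin F -> main_step (lst c i) s' o ->
    step c (LMain i) (Config (upd (lst c) i s') (bcast_opt (net c) i o))
| St_echo : forall i r b x, i \notin F ->
    started (tags (lst c i) r b) ->
    t.+1 <= nrcv (lst c i) (BVAL r b x) ->
    x \notin bsent (tags (lst c i) r b) ->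
    step c (LEcho i r b x)
      (Config (upd (lst c) i (echo_st (lst c i) r b x)) (bcast (net c) i (BVAL r b x)))
| St_add : forall i r b x, i \notin F ->
    started (tags (lst c i) r b) ->
    2 * t + 1 <= nrcv (lst c i) (BVAL r b x) ->
    x \notin bin (tags (lst c i) r b) ->
    step c (LAdd i r b x) (Config (upd (lst c) i (add_st (lst c i) r b x)) (net c))
| St_deliver : forall j i m, i \notin F -> net c j i m -> ~~ rcvd (lst c i) j m ->
    step c (LDeliver j i m) (Config (upd (lst c) i (deliver_st (lst c i) j m)) (net c))
| St_byz : forall j i m, j \in F ->
    step c (LByz j i m)
      (Config (lst c) (fun a b m' => net c a b m' || [&& a == j, b == i & m' == m]))
| St_idle : step c LIdle c.

Definition init_st (v0 : bool) : lstate :=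
  LState PInc 0 (Some v0) None (fun _ _ => tag0) (fun _ _ => false).

Definition initial (c : config) : Prop :=
  (exists prop : 'I_n -> bool, forall i, i \notin F -> lst c i = init_st (prop i)) /\
  (forall a b m, net c a b m = false).

Definition fair_lab (l : label) : bool :=
  match l with
  | LByz _ _ _ | LIdle => false
  | LDeliver j _ _ => j \notin F
  | _ => true
  end.

Definition enabled (c : config) (l : label) := exists c', step c l c'.

Definition fair_execution (ex : nat -> config) (lab : nat -> label) : Prop :=
  initial (ex 0) /\
  (forall k, step (ex k) (lab k) (ex k.+1)) /\
  (forall k l, fair_lab l ->
     (forall k', k <= k' -> enabled (ex k') l) ->
     exists k', k <= k' /\ lab k' = l).

End Model.

From mathcomp Require Import all_boot zify.
From Stdlib Require Import Classical.
Set Implicit Arguments. Unset Strict Implicit. Unset Printing Implicit Defensive.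

(* Safety: a value enters the bin of a non-faulty process only after 2t+1 > t
   processes sent BVAL for it, hence after some non-faulty process did. Since every
   non-faulty process enters round r with estimate v, an induction on the execution
   shows that all round-r BVAL and AUXSET messages of non-faulty processes carry v,
   so all round-r bins and views are {v}: a non-faulty process that is still
   undecided decides v in round r, and one that has finished round r has decided,
   so it never decides in a later round.
   Liveness: every wait of round r is eventually satisfied by the v-messages of the
   n - t >= 2t + 1 non-faulty processes, which fairness delivers; hence each
   non-faulty process goes through the seven steps of round r. *)

Lemma exists_subset_card (T : finType) (A : {set T}) k :
  k <= #|A| -> exists2 B : {set T}, B \subset A & #|B| = k.
Proof.
move=> hk; exists [set x in take k (enum A)].
  by apply/subsetP=> x; rewrite inE => /mem_take; rewrite mem_enum.
rewrite cardsE (card_uniqP _); last exact/take_uniq/enum_uniq.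
by rewrite size_takel // -cardE.
Qed.

Lemma card_lt_exists_notin (T : finType) (A B : {set T}) :
  #|A| < #|B| -> exists2 x, x \notin A & x \in B.
Proof.
move=> ltAB; have /subsetPn [x xB xA] : ~~ (B \subset A).
  by apply: contraTN ltAB => /subset_leq_card; rewrite leqNgt.
by exists x.
Qed.

Lemma imset_subset1 (aT rT : finType) (f : aT -> rT) (J : {set aT}) (B : {set rT}) y :
  J != set0 -> {in J, forall j, f j \in B} -> B \subset [set y] -> f @: J = [set y].
Proof.
move=> J0 fJB By; have sub : f @: J \subset [set y].
  by apply: subset_trans By; apply/subsetP=> _ /imsetP [j jJ ->]; exact: fJB.
by move: sub; rewrite subset1 imset_eq0 (negbTE J0) orbF => /eqP.
Qed.

Lemma stable_after (P : nat -> Prop) :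
  (forall k, P k -> P k.+1) -> forall k k', k <= k' -> P k -> P k'.
Proof.
by move=> hP k k' /subnK <-; elim: (k' - k) => [|d ih] //= /ih /hP.
Qed.

Lemma uniform_bound (T : finType) (A : {pred T}) (P : T -> nat -> Prop) :
  (forall x k k', k <= k' -> P x k -> P x k') ->
  (forall x, x \in A -> exists k, P x k) -> exists K, forall x, x \in A -> P x K.
Proof.
move=> hmono hex.
suff [K hK] : exists K, forall x, x \in enum T -> x \in A -> P x K.
  by exists K => x; apply: hK; rewrite mem_enum.
elim: (enum T) => [|x s [K ih]]; first by exists 0.
case: (boolP (x \in A)) => [/hex [kx hkx] | xA]; last first.
  by exists K => y; rewrite inE => /orP [/eqP -> | /ih //]; rewrite (negbTE xA).
exists (maxn K kx) => y; rewrite inE => /orP [/eqP -> _ | ys yA].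
  exact: hmono (leq_maxr _ _) hkx.
exact: hmono (leq_maxl _ _) (ih y ys yA).
Qed.

Lemma est_of_view1_set1 (x : value) : est_of_view1 [set x] = x.
Proof.
rewrite /est_of_view1; case: pickP => [w /eqP eq_xw | /(_ x)]; last by rewrite eqxx.
by apply/set1P; rewrite eq_xw set11.
Qed.

Lemma dec_after_decided V r d : dec_after V r (Some d) = Some d.
Proof. by rewrite /dec_after; case: pickP. Qed.

Lemma dec_after_undecided V r w r' :
  dec_after V r None = Some (w, r') -> V = [set Some w] /\ r' = r.
Proof. by rewrite /dec_after; case: pickP => // b /eqP -> [-> ->]. Qed.

Lemma dec_after_set1 v r d : dec_after [set Some v] r d != None.
Proof.
rewrite /dec_after; case: pickP => [b _ | /(_ v)]; last by rewrite eqxx.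
by case: d.
Qed.

Lemma echo_st_tags n (s : lstate n) r0 b0 x r b :
  started (tags (echo_st s r0 b0 x) r b) = started (tags s r b) /\
  bin (tags (echo_st s r0 b0 x) r b) = bin (tags s r b).
Proof. by rewrite /= /updtag; case: ifP => // /andP [/eqP -> /eqP ->]. Qed.

Lemma add_st_tags n (s : lstate n) r0 b0 x r b :
  started (tags (add_st s r0 b0 x) r b) = started (tags s r b) /\
  bin (tags (add_st s r0 b0 x) r b) =
    (if (r == r0) && (b == b0) then x |: bin (tags s r b) else bin (tags s r b)).
Proof. by rewrite /= /updtag; case: ifP => // /andP [/eqP -> /eqP ->]. Qed.

Definition stage (p : pcT) : nat :=
  match p with
  | PStart => 1 | PWaitBin false => 2 | PWaitAux false => 3 | PWaitAuxset => 4
  | PWaitBin true => 5 | PWaitAux true => 6 | PInc => 7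
  end.

Definition progress n (s : lstate n) := 7 * rnd s + stage (pc s).

Lemma stage_bounds p : 0 < stage p <= 7.
Proof. by case: p => [| |[]|[]|]. Qed.

Lemma stage_inj : injective stage.
Proof. by case=> [| |[]|[]|] [| |[]|[]|]. Qed.

Lemma progressP n (s : lstate n) r p :
  progress s = 7 * r + stage p -> rnd s = r /\ pc s = p.
Proof.
rewrite /progress => e; have := stage_bounds p; have := stage_bounds (pc s).
move=> hp hs; have er : rnd s = r by lia.
by split=> //; apply: stage_inj; lia.
Qed.

Lemma main_step_progress n t (s s' : lstate n) o :
  main_step t s s' o -> progress s' = (progress s).+1.
Proof.
by case=> [hpc|hpc|[] w hpc _|J f hpc _ _|J g hpc _ _|J f coin hpc _ _];
  rewrite /progress /= hpc /=; lia.
Qed.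

Section ConvergentRound.
Variables (n t : nat) (F : {set 'I_n}) (r : nat) (v : bool).
Hypotheses (Hnt : 3 * t < n) (HF : #|F| <= t).

Lemma card_non_faulty : #|~: F| = n - #|F|.
Proof. by rewrite cardsCs setCK card_ord. Qed.

Lemma quorum_has_correct (J : {set 'I_n}) : #|J| = n - t -> exists2 j, j \notin F & j \in J.
Proof. by move=> hJ; apply: card_lt_exists_notin; lia. Qed.

Lemma quorum_neq0 (J : {set 'I_n}) : #|J| = n - t -> J != set0.
Proof. by case/quorum_has_correct => j _ jJ; apply/set0Pn; exists j. Qed.

Lemma correct_quorum : exists2 J : {set 'I_n}, J \subset ~: F & #|J| = n - t.
Proof. by apply: exists_subset_card; rewrite card_non_faulty; lia. Qed.

Lemma received_from_correct (s : lstate n) m :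
  t < nrcv s m -> exists2 j, j \notin F & rcvd s j m.
Proof.
move=> htm; have [j jF] : exists2 j, j \notin F & j \in [set j | rcvd s j m].
  by apply: card_lt_exists_notin; exact: leq_ltn_trans HF htm.
by rewrite inE; exists j.
Qed.

Lemma nrcv_all_correct (s : lstate n) m :
  (forall j, j \notin F -> rcvd s j m) -> n - t <= nrcv s m.
Proof.
move=> hall; apply: leq_trans (leq_sub2l n HF) _; rewrite -card_non_faulty.
by apply/subset_leq_card/subsetP => j; rewrite !inE; apply: hall.
Qed.

Definition valid_msg (m : msg) : Prop :=
  match m with
  | BVAL r' _ x => r' = r -> x = Some v
  | AUX _ _ _ => True
  | AUXSET r' X => r' = r -> Some v \in X
  end.

Definition rcvd_valid (s : lstate n) :=
  forall j m, j \notin F -> rcvd s j m -> valid_msg m.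

Definition bins_v (s : lstate n) := forall b, bin (tags s r b) \subset [set Some v].

Definition start_est_v (s : lstate n) := pc s = PStart -> rnd s = r -> est s = Some v.

Lemma view_set1 (s : lstate n) b (J : {set 'I_n}) (f : 'I_n -> value) :
  bins_v s -> #|J| = n - t ->
  (forall j, j \in J -> rcvd s j (AUX r b (f j)) && (f j \in bin (tags s r b))) ->
  f @: J = [set Some v].
Proof.
move=> hb hJ hf; apply: imset_subset1 (quorum_neq0 hJ) _ (hb b).
by move=> j /hf /andP [].
Qed.

Lemma union_view_set1 (s : lstate n) (J : {set 'I_n}) (g : 'I_n -> {set value}) :
  rcvd_valid s -> bins_v s -> #|J| = n - t ->
  (forall j, j \in J -> rcvd s j (AUXSET r (g j)) && (g j \subset bin (tags s r false))) ->
  \bigcup_(j in J) g j = [set Some v].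
Proof.
move=> hv hb hJ hg; have [j0 j0F j0J] := quorum_has_correct hJ.
apply/eqP; rewrite eqEsubset; apply/andP; split.
  by apply/bigcupsP => j /hg /andP [_ /subset_trans]; apply.
have /andP [h0 _] := hg j0 j0J.
by rewrite sub1set; apply/bigcupP; exists j0 => //; apply: (hv _ _ j0F h0).
Qed.

(* What a non-faulty process has sent, resp. achieved locally, once it has
   entered [p] in round [r]. *)
Definition milestone_msg (p : pcT) : option msg :=
  match p with
  | PWaitBin b => Some (BVAL r b (Some v))
  | PWaitAux b => Some (AUX r b (Some v))
  | PWaitAuxset => Some (AUXSET r [set Some v])
  | _ => None
  end.

Definition milestone_local (p : pcT) (s : lstate n) : Prop :=
  match p with
  | PWaitBin b => started (tags s r b)
  | PWaitAux b => Some v \in bin (tags s r b)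
  | PInc => dec s <> None
  | _ => True
  end.

Definition reached (p : pcT) (s : lstate n) := 7 * r + stage p <= progress s.

Definition late_decisions_v (s : lstate n) :=
  forall w r', dec s = Some (w, r') -> r <= r' -> w = v /\ r' = r.

(* [nt i m]: the process has sent [m] to [p_i]. *)
Definition local_inv (s : lstate n) (nt : 'I_n -> msg -> bool) :=
  [/\ bins_v s, late_decisions_v s &
      forall p, reached p s ->
        milestone_local p s /\ forall i m, milestone_msg p = Some m -> nt i m].

Lemma main_step_tags (s s' : lstate n) o b : main_step t s s' o ->
  tags s' r b = tags s r b \/
  [/\ rnd s' = r, pc s' = PWaitBin b & bin (tags s' r b) = set0].
Proof.
case=> /= *; try by left.
all: rewrite /updtag; case: ifP => [/andP [/eqP -> /eqP ->] | _]; by [right | left].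
Qed.

Lemma main_step_dec (s s' : lstate n) o d : main_step t s s' o ->
  dec s = Some d -> dec s' = Some d.
Proof. by move=> hms hd; case: hms => //= *; rewrite hd dec_after_decided. Qed.

Lemma main_step_valid (s s' : lstate n) o m :
  rcvd_valid s -> bins_v s -> start_est_v s ->
  main_step t s s' o -> o = Some m -> valid_msg m.
Proof.
move=> hv hb he; case=> [_|hpc|b w _ _|J f _ hJ hf|J g _ hJ hg|J f coin _ hJ hf] //.
- by move=> [<-] /= er; apply: he.
- by move=> [<-].
- move=> [<-] /= er; rewrite er in hf.
  by rewrite (view_set1 hb hJ hf) set11.
- move=> [<-] /= er; rewrite er in hg.
  by rewrite (union_view_set1 hv hb hJ hg) est_of_view1_set1.
Qed.

Lemma main_step_enter (s s' : lstate n) o p :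
  rcvd_valid s -> bins_v s -> start_est_v s ->
  main_step t s s' o -> rnd s' = r -> pc s' = p ->
  milestone_local p s' /\ o = milestone_msg p.
Proof.
move=> hv hb he; case=> [_|hpc|b w _ hw|J f _ hJ hf|J g _ hJ hg|J f coin _ hJ hf] /= er <- //=.
- by rewrite /updtag er !eqxx (he hpc er).
- by rewrite er in hw *; have /set1P <- := subsetP (hb b) _ hw.
- by rewrite er in hf *; rewrite (view_set1 hb hJ hf).
- by rewrite er in hg *; rewrite /updtag !eqxx (union_view_set1 hv hb hJ hg) est_of_view1_set1.
- by rewrite er in hf *; rewrite (view_set1 hb hJ hf); split=> //; apply/eqP/dec_after_set1.
Qed.

Lemma main_step_milestone_stable (s s' : lstate n) o p :
  main_step t s s' o -> reached p s -> milestone_local p s -> milestone_local p s'.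
Proof.
move=> hms; have := main_step_progress hms; rewrite /reached.
case: p => [| |b|b|] //= hp hreach.
- by case hd: (dec s) => [d|] // _; rewrite (main_step_dec hms hd).
all: have [-> // | [er hpc' _]] := main_step_tags b hms.
all: move: hp hreach; rewrite /progress er hpc'; case: b {hpc'} => /=; lia.
Qed.

Lemma main_step_decisions (s s' : lstate n) o :
  bins_v s -> (reached PInc s -> dec s <> None) -> late_decisions_v s ->
  main_step t s s' o -> late_decisions_v s'.
Proof.
move=> hb h7 hd; case=> // J f coin hpc hJ hf /=.
move=> w r'; case hds: (dec s) => [d|]; first by rewrite dec_after_decided -hds; apply: hd.
move/dec_after_undecided => [hV ->] hle.
case: (ltngtP (rnd s) r) => er; first by lia.
  by exfalso; apply: h7 hds; rewrite /reached /progress hpc /=; lia.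
rewrite er in hf; move: hV; rewrite (view_set1 hb hJ hf) => hV.
by have /set1P [->] : Some w \in [set Some v] by rewrite hV set11.
Qed.

Lemma main_step_local_inv (s s' : lstate n) o (nt nt' : 'I_n -> msg -> bool) :
  rcvd_valid s -> start_est_v s -> local_inv s nt -> main_step t s s' o ->
  (forall i m, nt i m -> nt' i m) -> (forall i m, o = Some m -> nt' i m) ->
  local_inv s' nt'.
Proof.
move=> hv he [hb hd hm] hms hnt ho; split.
- by move=> b; have [-> | [_ _ ->]] := main_step_tags b hms; [apply: hb | apply: sub0set].
- by apply: main_step_decisions hms => // /hm [].
- move=> p; rewrite /reached (main_step_progress hms) leq_eqVlt ltnS => /orP [/eqP e | hp].
    have [er ep] := progressP (etrans (main_step_progress hms) (esym e)).
    have [hl eo] := main_step_enter hv hb he hms er ep.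
    by split=> // i m; rewrite -eo; apply: ho.
  have [hl hs] := hm p hp.
  by split; [apply: main_step_milestone_stable hms hp hl | move=> i m /hs /hnt].
Qed.

Lemma local_inv_grow (s s' : lstate n) (nt nt' : 'I_n -> msg -> bool) :
  local_inv s nt -> (forall i m, nt i m -> nt' i m) ->
  progress s' = progress s -> dec s' = dec s ->
  (forall b, started (tags s' r b) = started (tags s r b)) ->
  (forall b, bin (tags s r b) \subset bin (tags s' r b)) ->
  (forall b, bin (tags s' r b) \subset Some v |: bin (tags s r b)) ->
  local_inv s' nt'.
Proof.
move=> [hb hd hm] hnt hp hds hst hsub hsup; split.
- by move=> b; apply: subset_trans (hsup b) _; rewrite subUset sub1set set11 hb.
- by move=> w r'; rewrite hds; apply: hd.
- move=> p; rewrite /reached hp => /hm [hl hs]; split; last by move=> i m /hs /hnt.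
  case: p hl {hs} => [| |b|b|] //=; [by rewrite hds | by rewrite hst | exact: (subsetP (hsub b))].
Qed.

Lemma local_inv_net_mono (s : lstate n) (nt nt' : 'I_n -> msg -> bool) :
  local_inv s nt -> (forall i m, nt i m -> nt' i m) -> local_inv s nt'.
Proof. by move=> hs hnt; apply: local_inv_grow hs hnt _ _ _ _ _ => // b; apply: subsetUr. Qed.

Lemma main_step_rcvd (s s' : lstate n) o : main_step t s s' o -> rcvd s' = rcvd s.
Proof. by case. Qed.

Lemma step_net_mono (c c' : config n) l a b m :
  step t F c l c' -> net c a b m -> net c' a b m.
Proof.
case=> /= [i s' o _ _ | i r0 b0 x _ _ _ _ | | | j i m0 _ | ] //.
- by case: o => [m0|] //=; rewrite /bcast => ->.
- by rewrite /bcast => ->.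
- by move=> ->.
Qed.

Lemma step_rcvd (c c' : config n) l i j m : step t F c l c' ->
  rcvd (lst c' i) j m -> rcvd (lst c i) j m \/ net c j i m.
Proof.
case=> /= [i0 s' o _ hms | i0 | i0 | j0 i0 m0 _ hnet _ | | ]; try by left.
all: rewrite /upd; case: eqP => [-> | _]; try by left.
- by rewrite (main_step_rcvd hms); left.
- by case/orP => [| /andP [/eqP -> /eqP ->]]; [left | right].
Qed.

Definition rcvd_authentic (c : config n) :=
  forall i j m, i \notin F -> j \notin F -> rcvd (lst c i) j m -> net c j i m.

Definition sent_valid (c : config n) :=
  forall j i m, j \notin F -> net c j i m -> valid_msg m.

Definition safe_config (c : config n) :=
  [/\ rcvd_authentic c, sent_valid c &
      forall j, j \notin F -> local_inv (lst c j) (net c j)].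

Lemma safe_rcvd_valid c i : safe_config c -> i \notin F -> rcvd_valid (lst c i).
Proof. by case=> ha hs _ hi j m hj /(ha _ _ _ hi hj); apply: hs. Qed.

Lemma safe_quorum_valid c i m :
  safe_config c -> i \notin F -> t < nrcv (lst c i) m -> valid_msg m.
Proof.
by move=> hc hi /received_from_correct [j hj hr]; apply: safe_rcvd_valid hc hi j m hj hr.
Qed.

Lemma step_rcvd_authentic c l c' :
  rcvd_authentic c -> step t F c l c' -> rcvd_authentic c'.
Proof.
move=> ha hs i j m hi hj /(step_rcvd hs) [/(ha _ _ _ hi hj) |]; exact: step_net_mono hs.
Qed.

Lemma step_sent_valid c l c' :
  safe_config c -> (forall i, i \notin F -> start_est_v (lst c i)) ->
  step t F c l c' -> sent_valid c'.
Proof.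
move=> hc he; have [_ hsv hl] := hc.
case=> /= [i s' o hi hms | i r0 b x hi _ hn _ | | | j i m hj | ] // j0 i0 m0 hj0.
- case: o hms => [m|] hms /=; last exact: hsv.
  rewrite /bcast => /orP [| /andP [_ /eqP ->]]; first exact: hsv.
  have [hb _ _] := hl i hi.
  exact: main_step_valid (safe_rcvd_valid hc hi) hb (he i hi) hms erefl.
- rewrite /bcast => /orP [| /andP [_ /eqP ->]]; first exact: hsv.
  exact: safe_quorum_valid hc hi hn.
- case/orP => [| /and3P [/eqP e _ _]]; first exact: hsv.
  by rewrite e hj in hj0.
Qed.

Lemma step_local_inv c l c' :
  safe_config c -> (forall i, i \notin F -> start_est_v (lst c i)) ->
  step t F c l c' -> forall j, j \notin F -> local_inv (lst c' j) (net c' j).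
Proof.
move=> hc he hs; have [_ _ hl] := hc.
have hnet j i m : net c j i m -> net c' j i m by apply: step_net_mono hs.
case: hs hnet => /= [i s' o hi hms | i r0 b x hi _ hn _ | i r0 b x hi _ hn _ | j0 i m hi _ _ | j0 i m _ | ]
  hnet j hj; last 2 first.
- exact: local_inv_net_mono (hl j hj) (hnet j).
- exact: hl.
all: rewrite /upd; case: eqP => [-> | _]; last exact: local_inv_net_mono (hl j hj) (hnet j).
- apply: main_step_local_inv (safe_rcvd_valid hc hi) (he i hi) (hl i hi) hms (hnet i) _.
  by move=> i0 m ->; rewrite /= /bcast !eqxx orbT.
- apply: local_inv_grow (hl i hi) (hnet i) _ _ _ _ _ => // b';
    have [hst hbin] := echo_st_tags (lst c i) r0 b x r b'; rewrite ?hst ?hbin ?subsetUr //.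
- have hx : valid_msg (BVAL r0 b x) by apply: safe_quorum_valid hc hi _; lia.
  apply: local_inv_grow (hl i hi) (hnet i) _ _ _ _ _ => // b';
    have [hst hbin] := add_st_tags (lst c i) r0 b x r b'; rewrite ?hst ?hbin //.
  + by case: ifP => _ //; apply: subsetUr.
  + case: ifP => [/andP [/eqP er _] | _]; last exact: subsetUr.
    by rewrite (hx (esym er)).
- by apply: local_inv_grow (hl i hi) (hnet i) _ _ _ _ _ => // b'; apply: subsetUr.
Qed.

Lemma step_safe c l c' :
  safe_config c -> (forall i, i \notin F -> start_est_v (lst c i)) ->
  step t F c l c' -> safe_config c'.
Proof.
move=> hc he hs; split; last exact: step_local_inv hc he hs.
- by case: hc => ha _ _; apply: step_rcvd_authentic ha hs.
- exact: step_sent_valid hc he hs.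
Qed.

(* A process starts with [progress] 7, as if it had completed round 0. *)
Lemma initial_safe c : 0 < r -> initial F c -> safe_config c.
Proof.
move=> r_gt0 [[prop hp] hnet]; split.
- by move=> i j m hi _; rewrite hp.
- by move=> j i m _; rewrite hnet.
move=> j hj; rewrite hp //; split=> // [b | p]; first exact: sub0set.
by rewrite /reached /progress /=; have := stage_bounds p; lia.
Qed.

Lemma progress_step_mono c l c' i :
  step t F c l c' -> progress (lst c i) <= progress (lst c' i).
Proof.
case=> /= [i0 s' o _ hms | i0 r0 b0 x _ _ _ _ | i0 r0 b0 x _ _ _ _ | j0 i0 m0 _ _ _ | | ] //;
  rewrite /upd; case: eqP => // ->; [by rewrite (main_step_progress hms) | exact: leqnn ..].
Qed.

Lemma main_label_progress c c' j :
  step t F c (LMain j) c' -> progress (lst c' j) = (progress (lst c j)).+1.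
Proof.
move e: (LMain j) => l hs; case: hs e => //= i s' o _ hms [->].
by rewrite /upd eqxx (main_step_progress hms).
Qed.

Lemma rcvd_step_mono c l c' i j m :
  step t F c l c' -> rcvd (lst c i) j m -> rcvd (lst c' i) j m.
Proof.
case=> /= [i0 s' o _ hms | i0 r0 b0 x _ _ _ _ | i0 r0 b0 x _ _ _ _ | j0 i0 m0 _ _ _ | | ] //;
  rewrite /upd; case: eqP => // ->;
  [by rewrite (main_step_rcvd hms) | exact: id | exact: id | by rewrite /= => ->].
Qed.

Lemma deliver_label_rcvd c c' j i m :
  step t F c (LDeliver j i m) c' -> rcvd (lst c' i) j m.
Proof.
move e: (LDeliver j i m) => l hs; case: hs e => //= j0 i0 m0 _ _ _ [-> -> ->].
by rewrite /upd eqxx /= !eqxx orbT.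
Qed.

Lemma add_label_bin c c' i r0 b x :
  step t F c (LAdd i r0 b x) c' -> x \in bin (tags (lst c' i) r0 b).
Proof.
move e: (LAdd i r0 b x) => l hs; case: hs e => //= i1 r1 b1 x1 _ _ _ _ [-> -> -> ->].
by rewrite /upd eqxx /= /updtag !eqxx /= setU11.
Qed.

Lemma bin_step_mono c l c' i b : step t F c l c' -> reached (PWaitBin b) (lst c i) ->
  bin (tags (lst c i) r b) \subset bin (tags (lst c' i) r b).
Proof.
case=> /= [i0 s' o _ hms | i0 r0 b0 x _ _ _ _ | i0 r0 b0 x _ _ _ _ | j0 i0 m0 _ _ _ | | ] //;
  rewrite /upd; case: eqP => // -> hreach.
- have [-> // | [er hpc _]] := main_step_tags b hms.
  by move: (main_step_progress hms) hreach; rewrite /reached /progress er hpc; lia.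
- by have [_ ->] := echo_st_tags (lst c i0) r0 b0 x r b.
- by have [_ ->] := add_st_tags (lst c i0) r0 b0 x r b; case: ifP => _ //; apply: subsetUr.
- exact: subxx.
Qed.

Section Execution.
Variables (ex : nat -> config n) (lab : nat -> label n).
Hypotheses (Hfair : fair_execution t F ex lab)
  (Hest : forall k i, i \notin F -> start_est_v (lst (ex k) i)).

Lemma step_at k : step t F (ex k) (lab k) (ex k.+1).
Proof. by case: Hfair => _ []. Qed.

Lemma progress_mono k k' i T : k <= k' ->
  T <= progress (lst (ex k) i) -> T <= progress (lst (ex k') i).
Proof.
apply: (stable_after (P := fun k => T <= progress (lst (ex k) i))) => k0 h.
exact: leq_trans h (progress_step_mono i (step_at k0)).
Qed.

Lemma rcvd_mono k k' i j m : k <= k' ->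
  rcvd (lst (ex k) i) j m -> rcvd (lst (ex k') i) j m.
Proof.
apply: (stable_after (P := fun k => rcvd (lst (ex k) i) j m)) => k0.
exact: rcvd_step_mono (step_at k0).
Qed.

Lemma net_mono k k' a b m : k <= k' -> net (ex k) a b m -> net (ex k') a b m.
Proof.
apply: (stable_after (P := fun k => net (ex k) a b m)) => k0.
exact: step_net_mono (step_at k0).
Qed.

Lemma start_round_pos :
  (forall i, i \notin F -> exists k, pc (lst (ex k) i) = PStart /\ rnd (lst (ex k) i) = r) ->
  0 < r.
Proof.
move=> hstart; have [i hi _] : exists2 i, i \notin F & i \in [set: 'I_n].
  by apply: card_lt_exists_notin; rewrite cardsT card_ord; lia.
have [k [hpc hrnd]] := hstart i hi.
have h0 : 7 <= progress (lst (ex 0) i) by case: Hfair => [[[prop hp] _] _]; rewrite hp.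
by have := progress_mono (leq0n k) h0; rewrite /progress hpc hrnd /=; lia.
Qed.

Lemma eventually_by_fairness l k0 (Q : nat -> Prop) : fair_lab F l ->
  (forall k, k0 <= k -> ~ Q k -> enabled t F (ex k) l) ->
  (forall k, k0 <= k -> step t F (ex k) l (ex k.+1) -> Q k.+1) ->
  exists2 k, k0 <= k & Q k.
Proof.
move=> hl hen hQ; apply: NNPP => hno.
have [k [hk e]] : exists k, k0 <= k /\ lab k = l.
  case: Hfair => _ [_ hf]; apply: hf hl _ => k hk.
  by apply: (hen k hk) => hQk; apply: hno; exists k.
by apply: hno; exists k.+1; [apply: leqW | apply: hQ hk _; rewrite -e; apply: step_at].
Qed.

Lemma eventually_received i j m k : i \notin F -> j \notin F ->
  net (ex k) j i m -> exists k', rcvd (lst (ex k') i) j m.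
Proof.
move=> hi hj hn.
suff [k' _ hk'] : exists2 k', k <= k' & rcvd (lst (ex k') i) j m by exists k'.
apply: (eventually_by_fairness (l := LDeliver j i m)) hj _ _ => k1 hk1.
- by move=> hno; eexists; apply: St_deliver hi (net_mono hk1 hn) _; apply/negP.
- exact: deliver_label_rcvd.
Qed.

Lemma eventually_received_all i m : i \notin F ->
  (forall j, j \notin F -> exists k, net (ex k) j i m) ->
  exists K, forall k, K <= k -> forall j, j \notin F -> rcvd (lst (ex k) i) j m.
Proof.
move=> hi hsent.
have [K hK] : exists K, forall j, j \in [pred j | j \notin F] -> rcvd (lst (ex K) i) j m.
  apply: (uniform_bound (P := fun j k => rcvd (lst (ex k) i) j m)) => [j k k' | j hj].
    exact: rcvd_mono.
  by have [k hk] := hsent j hj; apply: eventually_received hi hj hk.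
by exists K => k hk j hj; apply: rcvd_mono hk (hK j hj).
Qed.

Hypothesis Hr : 0 < r.

Lemma safe_at k : safe_config (ex k).
Proof.
elim: k => [|k ih]; first by case: Hfair => hinit _; apply: initial_safe.
exact: step_safe ih (@Hest k) (step_at k).
Qed.

Lemma milestone_at k j p : j \notin F -> reached p (lst (ex k) j) ->
  milestone_local p (lst (ex k) j) /\
  forall i m, milestone_msg p = Some m -> net (ex k) j i m.
Proof. by move=> hj; case: (safe_at k) => _ _ /(_ j hj) [_ _]; apply. Qed.

Definition all_progress T := forall j, j \notin F -> exists k, T <= progress (lst (ex k) j).

Lemma milestone_received p m j : all_progress (7 * r + stage p) ->
  milestone_msg p = Some m -> j \notin F ->
  exists K, forall k, K <= k -> forall j', j' \notin F -> rcvd (lst (ex k) j) j' m.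
Proof.
move=> hall hp hj; apply: eventually_received_all hj _ => j' hj'.
by have [k hk] := hall j' hj'; exists k; apply: (milestone_at hj' hk).2.
Qed.

Lemma enabled_main c j s' o : j \notin F -> main_step t (lst c j) s' o -> enabled t F c (LMain j).
Proof. by move=> hj hms; eexists; apply: St_main hj hms. Qed.

Lemma progress_next p : all_progress (7 * r + stage p) ->
  (forall j, j \notin F -> exists K, forall k, K <= k ->
     rnd (lst (ex k) j) = r -> pc (lst (ex k) j) = p -> enabled t F (ex k) (LMain j)) ->
  all_progress (7 * r + (stage p).+1).
Proof.
move=> hall hen j hj; have [k0 hk0] := hall j hj; have [K hK] := hen j hj.
suff [k _ hk] : exists2 k, maxn k0 K <= k & 7 * r + (stage p).+1 <= progress (lst (ex k) j).
  by exists k.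
apply: (eventually_by_fairness (l := LMain j)) isT _ _ => k hk.
- move=> hno; have := progress_mono (leq_trans (leq_maxl _ _) hk) hk0 => hge.
  have [er ep] : rnd (lst (ex k) j) = r /\ pc (lst (ex k) j) = p by apply: progressP; lia.
  exact: hK (leq_trans (leq_maxr _ _) hk) er ep.
- move=> hs; rewrite (main_label_progress hs) addnS ltnS.
  exact: progress_mono (leq_trans (leq_maxl _ _) hk) hk0.
Qed.

Lemma eventually_v_in_bin b j : all_progress (7 * r + stage (PWaitBin b)) -> j \notin F ->
  exists K, forall k, K <= k -> Some v \in bin (tags (lst (ex k) j) r b).
Proof.
move=> hall hj; have [k0 hk0] := hall j hj.
have [K1 hK1] := milestone_received (p := PWaitBin b) hall erefl hj.
have [k1 hk1 hin] : exists2 k1, maxn k0 K1 <= k1 & Some v \in bin (tags (lst (ex k1) j) r b).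
  apply: (eventually_by_fairness (l := LAdd j r b (Some v))) isT _ _ => k hk.
  - move=> hno; eexists; apply: (St_add hj).
    + exact: (milestone_at hj (progress_mono (leq_trans (leq_maxl _ _) hk) hk0)).1.
    + by have := nrcv_all_correct (hK1 k (leq_trans (leq_maxr _ _) hk)); lia.
    + exact/negP.
  - exact: add_label_bin.
exists k1 => k hk.
suff [] : reached (PWaitBin b) (lst (ex k) j) /\ Some v \in bin (tags (lst (ex k) j) r b) by [].
apply: (stable_after (P := fun k => reached (PWaitBin b) (lst (ex k) j) /\
                                   Some v \in bin (tags (lst (ex k) j) r b))) hk _.
  move=> k' [hreach hin']; split; first exact: leq_trans hreach (progress_step_mono j (step_at k')).
  exact: subsetP (bin_step_mono (step_at k') hreach) _ hin'.
by split=> //; apply: progress_mono (leq_trans (leq_maxl _ _) hk1) hk0.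
Qed.

Lemma progress_start :
  all_progress (7 * r + stage PStart) -> all_progress (7 * r + stage (PWaitBin false)).
Proof.
move=> hall; apply: (progress_next hall) => j hj.
by exists 0 => k _ _ hpc; apply: enabled_main hj (MS_start t hpc).
Qed.

Lemma progress_bin b :
  all_progress (7 * r + stage (PWaitBin b)) -> all_progress (7 * r + stage (PWaitAux b)).
Proof.
have -> : stage (PWaitAux b) = (stage (PWaitBin b)).+1 by case: b.
move=> hall.
apply: (progress_next hall) => j hj; have [K hK] := eventually_v_in_bin hall hj.
exists K => k hk er hpc; apply: enabled_main hj (MS_aux t (w := Some v) hpc _).
by rewrite er; apply: hK.
Qed.

Lemma progress_aux b :
  all_progress (7 * r + stage (PWaitAux b)) -> all_progress (7 * r + (stage (PWaitAux b)).+1).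
Proof.
move=> hall; apply: (progress_next hall) => j hj.
have [K hK] := milestone_received (p := PWaitAux b) hall erefl hj.
have [J hJF hJ] := correct_quorum.
exists K => k hk er hpc.
have hreach : reached (PWaitAux b) (lst (ex k) j) by rewrite /reached /progress er hpc.
have [hin _] := milestone_at hj hreach.
have hf j' : j' \in J -> rcvd (lst (ex k) j) j' (AUX (rnd (lst (ex k) j)) b (Some v)) &&
    (Some v \in bin (tags (lst (ex k) j) (rnd (lst (ex k) j)) b)).
  by move=> /(subsetP hJF); rewrite er hin andbT inE; apply: hK hk j'.
case: b {hall hK hin hreach} hpc hf => hpc hf.
- exact: enabled_main hj (MS_view2 (f := fun=> Some v) false hpc hJ hf).
- exact: enabled_main hj (MS_view0 (f := fun=> Some v) hpc hJ hf).
Qed.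

Lemma progress_auxset :
  all_progress (7 * r + stage PWaitAuxset) -> all_progress (7 * r + stage (PWaitBin true)).
Proof.
move=> hall; apply: (progress_next hall) => j hj.
have [K hK] := milestone_received (p := PWaitAuxset) hall erefl hj.
have [J hJF hJ] := correct_quorum.
exists K => k hk er hpc.
have hreach : reached (PWaitAux false) (lst (ex k) j).
  by rewrite /reached /progress er hpc leq_add2l.
have [hin _] := milestone_at hj hreach.
have hg j' : j' \in J -> rcvd (lst (ex k) j) j' (AUXSET (rnd (lst (ex k) j)) [set Some v]) &&
    ([set Some v] \subset bin (tags (lst (ex k) j) (rnd (lst (ex k) j)) false)).
  by move=> /(subsetP hJF); rewrite er sub1set hin andbT inE; apply: hK hk j'.
exact: enabled_main hj (MS_view1 (g := fun=> [set Some v]) hpc hJ hg).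
Qed.

Lemma progress_inc : all_progress (7 * r + stage PInc) -> all_progress (7 * r + 8).
Proof.
move=> hall; apply: (progress_next hall) => j hj.
by exists 0 => k _ _ hpc; apply: enabled_main hj (MS_inc t hpc).
Qed.

Lemma round_r_completes :
  all_progress (7 * r + stage PStart) -> forall i, i \notin F -> exists k, r < rnd (lst (ex k) i).
Proof.
move=> hstart i hi.
have [k hk] := progress_inc (progress_aux (progress_bin (progress_auxset
  (progress_aux (progress_bin (progress_start hstart)))))) hi.
by exists k; move: hk; rewrite /progress; have := stage_bounds (pc (lst (ex k) i)); lia.
Qed.

Lemma decided_after_round_r i k : i \notin F -> r < rnd (lst (ex k) i) ->
  dec (lst (ex k) i) = Some (v, r) \/ exists w r', r' < r /\ dec (lst (ex k) i) = Some (w, r').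
Proof.
move=> hi hrk; have [_ _ /(_ i hi) [_ hd _]] := safe_at k.
have hreach : reached PInc (lst (ex k) i).
  by rewrite /reached /progress /=; have := stage_bounds (pc (lst (ex k) i)); lia.
have [+ _] := milestone_at hi hreach.
case hds: (dec _) => [[w r'] | //] _.
have [hle | hlt] := leqP r r'; last by right; exists w, r'.
by have [-> ->] := hd w r' hds hle; left.
Qed.

Lemma late_decision_v i k w r' : i \notin F ->
  dec (lst (ex k) i) = Some (w, r') -> r <= r' -> w = v.
Proof.
by move=> hi hd hle; have [_ _ /(_ i hi) [_ /(_ w r' hd hle) []]] := safe_at k.
Qed.

End Execution.
End ConvergentRound.

Theorem lemma8 (n t : nat) (F : {set 'I_n})
    (ex : nat -> config n) (lab : nat -> label n) (r : nat) (v : bool) :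
  3 * t < n -> #|F| <= t ->
  fair_execution t F ex lab ->
  (forall i, i \notin F -> exists k, pc (lst (ex k) i) = PStart /\ rnd (lst (ex k) i) = r) ->
  (forall i k, i \notin F -> pc (lst (ex k) i) = PStart -> rnd (lst (ex k) i) = r ->
     est (lst (ex k) i) = Some v) ->
  (forall i, i \notin F -> exists k, r < rnd (lst (ex k) i)) /\
  (forall i k, i \notin F -> r < rnd (lst (ex k) i) ->
     dec (lst (ex k) i) = Some (v, r) \/
     exists w r', r' < r /\ dec (lst (ex k) i) = Some (w, r')) /\
  (forall i k w r', i \notin F -> dec (lst (ex k) i) = Some (w, r') -> r <= r' -> w = v).
Proof.
move=> Hnt HF Hfair Hstart Hest.
have Hest_v k i : i \notin F -> start_est_v r v (lst (ex k) i) by apply: Hest.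
have Hr := start_round_pos Hnt HF Hfair Hstart.
split; [|split].
- apply: (round_r_completes Hnt HF Hfair Hest_v Hr) => j hj.
  by have [k [hpc hrnd]] := Hstart j hj; exists k; rewrite /progress hpc hrnd.
- exact: (decided_after_round_r Hnt HF Hfair Hest_v Hr).
- exact: (late_decision_v Hnt HF Hfair Hest_v Hr).
Qed.
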